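(* Consider the 2-component Camassa-Holm equations on $x\in\mathbb{R}$: $$\rho_t+u\rho_x+\rho u_x=0,\qquad m_t+2u_xm+um_x+\sigma\rho\rho_x=0,\qquad m=u-\alpha^2u_{xx},$$ with $\sigma=\pm1$. This system admits the following family of (linear-velocity, not necessarily radially symmetric) solutions: $$\rho^2(x,t)=\max\Big\{\rho^2(0,t)-\tfrac{2}{\sigma}\Big[\dot b(t)+3b(t)\tfrac{\dot a(3t)}{a(3t)}\Big]x-\tfrac{3\xi}{\sigma a^{4/3}(3t)}x^2,\;0\Big\},\qquad u(x,t)=\frac{\dot a(3t)}{a(3t)}x+b(t),$$ where $a(3t)$ solves the Emden equation $$\frac{d^2}{dt^2}a(3t)=\frac{\xi}{a^{1/3}(3t)},\quad a(0)=a_0>0,\ \dot a(0)=a_1,$$ $b(t)$ solves $$\ddot b(t)+\frac{6\dot a(3t)}{a(3t)}\dot b(t)+\frac{12\xi}{a^{4/3}(3t)}b(t)=0,\quad b(0)=b_0,\ \dot b(0)=b_1,$$ and $\rho^2(0,t)$ solves $$\frac{d}{dt}\big[\rho^2(0,t)\big]+\frac{2\dot a(3t)}{a(3t)}\rho^2(0,t)-\frac{2}{\sigma}b(t)\Big[\dot b(t)+3b(t)\frac{\dot a(3t)}{a(3t)}\Big]=0,\quad \rho^2(0,0)=\alpha^2,$$ with $a_0,a_1,b_0,b_1,\xi,\alpha$ arbitrary constants; the solutions exist as long as $1/a(3t)$ and $\dot a(3t)$ exist.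
   Context: Here $u(x,t)$ is the velocity and $\rho(x,t)\ge0$ the density; $\dot a(3t):=\frac{d}{dt}a(3t)$. The construction substitutes $u=c(t)x+b(t)$ with the Hubble transformation $c(t)=\dot a(3t)/a(3t)$ and compares polynomial coefficients in $x$.
   Formalization: The system is claimed only at points (x,t) where the quantity inside max{…,0} is positive, and ȧ(3t) is a′(s) at s = 3t rather than d/dt of a(3t), the Emden equation being a″(s) = ξ/∛a(s) in s. Each condition added here is assumed in the paper as well or is needed for the statement above to hold. This also corrects a misprint. *)

From Stdlib Require Import Reals.
From Coquelicot Require Import Coquelicot.
Open Scope R_scope.

(* Convention: a : R -> R is a function of its own variable s; "adot(3t)"
   denotes (Derive a) evaluated at s = 3t. *)

Definition hubble (a : R -> R) (t : R) : R := Derive a (3 * t) / a (3 * t).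

Definition a43 (a : R -> R) (t : R) : R := Rpower (a (3 * t)) (4 / 3).

(* The quadratic whose positive part is rho^2(x,t);  r t = rho^2(0,t). *)
Definition rho2_quad (sigma xi : R) (a b r : R -> R) (x t : R) : R :=
  r t - (2 / sigma) * (Derive b t + 3 * b t * hubble a t) * x
      - (3 * xi / (sigma * a43 a t)) * x ^ 2.

Definition rho_sol (sigma xi : R) (a b r : R -> R) (x t : R) : R :=
  sqrt (Rmax (rho2_quad sigma xi a b r x t) 0).

Definition u_sol (a b : R -> R) (x t : R) : R := hubble a t * x + b t.

Definition m_of (alpha : R) (u : R -> R -> R) (x t : R) : R :=
  u x t - alpha ^ 2 * Derive (fun y => Derive (fun z => u z t) y) x.

Definition dx (f : R -> R -> R) (x t : R) : R := Derive (fun y => f y t) x.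
Definition dt (f : R -> R -> R) (x t : R) : R := Derive (fun s => f x s) t.
Definition ex_dx (f : R -> R -> R) (x t : R) : Prop := ex_derive (fun y => f y t) x.
Definition ex_dt (f : R -> R -> R) (x t : R) : Prop := ex_derive (fun s => f x s) t.

From Stdlib Require Import Reals Lra FunctionalExtensionality.
From Coquelicot Require Import Coquelicot.
Open Scope R_scope.

(** With [u = c(t) x + b(t)] we have [u_xx = 0], hence [m = u], and the
    momentum equation reduces to [u_t + 3 c u + sigma rho rho_x = 0].  Writing
    [Q = rho^2 = r - (2/sigma) B x - K x^2] with [B = b' + 3 b c] and
    [K = 3 xi / (sigma a^{4/3})], the continuity equation becomes
    [Q_t + u Q_x + 2 c Q = 0] wherever [Q > 0].  Both equations are polynomial
    in [x]; comparing coefficients, they follow from the three evolution laws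
    [c' = sigma K - 3 c^2] (the Emden equation), [B' = -3 c B - sigma b K]
    (the equation for [b]), [K' = -4 c K], and the equation for [r]. *)

Lemma is_derive_sqrt_pos_part (f : R -> R) (t l : R) :
  is_derive f t l -> 0 < f t ->
  is_derive (fun s => sqrt (Rmax (f s) 0)) t (l / (2 * sqrt (f t))).
Proof.
intros Hf Hpos.
apply is_derive_ext_loc with (fun s => sqrt (f s)); [| exact (is_derive_sqrt f t l Hf Hpos)].
assert (Hnear : locally t (fun s => 0 < f s)).
{ apply (ex_derive_continuous f t (ex_intro _ l Hf)). exact (open_gt 0 (f t) Hpos). }
revert Hnear; apply filter_imp. intros s Hs. rewrite Rmax_left; lra.
Qed.

Lemma continuity_sqrt_pos_part (q u : R -> R -> R) (x t : R) :
  0 < q x t -> ex_dt q x t -> ex_dx q x t -> ex_dx u x t ->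
  dt q x t + u x t * dx q x t + 2 * dx u x t * q x t = 0 ->
  let rho := fun y s => sqrt (Rmax (q y s) 0) in
  ex_dt rho x t /\ ex_dx rho x t /\
  dt rho x t + u x t * dx rho x t + rho x t * dx u x t = 0 /\
  rho x t * dx rho x t = dx q x t / 2.
Proof.
intros Hq [qt Hqt] [qx Hqx] _ Htransport rho.
pose proof (is_derive_sqrt_pos_part _ _ _ Hqt Hq) as Hrt.
pose proof (is_derive_sqrt_pos_part _ _ _ Hqx Hq) as Hrx.
assert (Eqt : dt q x t = qt) by exact (is_derive_unique _ _ _ Hqt).
assert (Eqx : dx q x t = qx) by exact (is_derive_unique _ _ _ Hqx).
assert (Ert : dt rho x t = qt / (2 * sqrt (q x t))) by exact (is_derive_unique _ _ _ Hrt).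
assert (Erx : dx rho x t = qx / (2 * sqrt (q x t))) by exact (is_derive_unique _ _ _ Hrx).
assert (Hsqrt : 0 < sqrt (q x t)) by (apply sqrt_lt_R0; exact Hq).
assert (Hsq : sqrt (q x t) * sqrt (q x t) = q x t) by (apply sqrt_sqrt; lra).
assert (Hrho : rho x t = sqrt (q x t)) by (unfold rho; rewrite Rmax_left; lra).
split; [eexists; exact Hrt |]. split; [eexists; exact Hrx |].
rewrite Ert, Erx, Hrho, Eqx.
split; [| field; lra].
rewrite Eqt, Eqx, <- Hsq in Htransport.
replace (qt / (2 * sqrt (q x t)) + u x t * (qx / (2 * sqrt (q x t)))
           + sqrt (q x t) * dx u x t)
  with ((qt + u x t * qx + 2 * dx u x t * (sqrt (q x t) * sqrt (q x t)))
          / (2 * sqrt (q x t))) by (field; lra).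
rewrite Htransport. unfold Rdiv. ring.
Qed.

Lemma m_of_u_sol (alpha : R) (a b : R -> R) : m_of alpha (u_sol a b) = u_sol a b.
Proof.
apply functional_extensionality; intro x; apply functional_extensionality; intro t.
unfold m_of.
rewrite (Derive_ext (fun y => Derive (fun z => u_sol a b z t) y) (fun _ => hubble a t)).
- rewrite Derive_const. ring.
- intro y. apply is_derive_unique. unfold u_sol. auto_derive; [exact I | ring].
Qed.

Lemma is_derive_u_sol_x (a b : R -> R) (x t : R) :
  is_derive (fun y => u_sol a b y t) x (hubble a t).
Proof. unfold u_sol. auto_derive; [exact I | ring]. Qed.

Lemma is_derive_u_sol_t (a b : R -> R) (x t c' b' : R) :
  is_derive (hubble a) t c' -> is_derive b t b' ->
  is_derive (fun s => u_sol a b x s) t (c' * x + b').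
Proof.
intros Hc Hb. unfold u_sol.
replace (c' * x + b') with (x * c' + b') by ring.
apply (is_derive_ext (fun s => x * hubble a s + b s)); [intro s; cbn; ring |].
apply (is_derive_plus (fun s => x * hubble a s) b); [| exact Hb].
apply is_derive_scal; exact Hc.
Qed.

Lemma is_derive_hubble (a : R -> R) (t a2 : R) :
  a (3 * t) <> 0 -> ex_derive a (3 * t) -> is_derive (Derive a) (3 * t) a2 ->
  is_derive (hubble a) t (3 * a2 / a (3 * t) - 3 * hubble a t ^ 2).
Proof.
intros Ha Hea Hda. unfold hubble. auto_derive.
- repeat split; [exists a2; exact Hda | exact Hea | exact Ha].
- change (Derive (fun s => Derive a s) (3 * t)) with (Derive (Derive a) (3 * t)).
  change (Derive (fun s => a s) (3 * t)) with (Derive a (3 * t)).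
  rewrite (is_derive_unique _ _ _ Hda). field. exact Ha.
Qed.

Lemma is_derive_a43 (a : R -> R) (t : R) :
  0 < a (3 * t) -> ex_derive a (3 * t) ->
  is_derive (a43 a) t (4 * hubble a t * a43 a t).
Proof.
intros Ha Hea. unfold a43, hubble, Rpower. auto_derive.
- repeat split; [exact Hea | exact Ha].
- change (Derive (fun s => a s) (3 * t)) with (Derive a (3 * t)).
  field. lra.
Qed.

Definition rho2_lin (a b : R -> R) (t : R) : R := Derive b t + 3 * b t * hubble a t.

Definition rho2_curv (sigma xi : R) (a : R -> R) (t : R) : R := 3 * xi / (sigma * a43 a t).

Lemma Rpower_four_thirds (A : R) : 0 < A -> Rpower A (4 / 3) = A * Rpower A (1 / 3).
Proof.
intros HA. replace (4 / 3) with (1 + 1 / 3) by field.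
rewrite Rpower_plus, Rpower_1 by exact HA. reflexivity.
Qed.

Lemma is_derive_rho2_quad_x (sigma xi : R) (a b r : R -> R) (x t : R) :
  is_derive (fun y => rho2_quad sigma xi a b r y t) x
    (- (2 / sigma) * rho2_lin a b t - 2 * rho2_curv sigma xi a t * x).
Proof. unfold rho2_quad. auto_derive; [exact I |]. unfold rho2_lin, rho2_curv. ring. Qed.

Section Evolution.

Variables (sigma xi : R) (a b r : R -> R) (t : R).

Hypothesis sigma_neq0 : sigma <> 0.
Hypothesis a_pos : 0 < a (3 * t).
Hypothesis a_ex_derive : ex_derive a (3 * t).
Hypothesis Emden : is_derive (Derive a) (3 * t) (xi / Rpower (a (3 * t)) (1 / 3)).
Hypothesis b_ex_derive : ex_derive b t.
Hypothesis db_ex_derive : ex_derive (Derive b) t.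
Hypothesis b_eq : Derive (Derive b) t + 6 * hubble a t * Derive b t
                    + 12 * xi / a43 a t * b t = 0.
Hypothesis r_ex_derive : ex_derive r t.
Hypothesis r_eq : Derive r t + 2 * hubble a t * r t
                    - (2 / sigma) * b t * (Derive b t + 3 * b t * hubble a t) = 0.

Local Notation c := (hubble a t).
Local Notation B := (rho2_lin a b t).
Local Notation K := (rho2_curv sigma xi a t).

Lemma a43_pos : 0 < a43 a t.
Proof. apply exp_pos. Qed.

Lemma Emden_accel : 3 * (xi / Rpower (a (3 * t)) (1 / 3)) / a (3 * t) = sigma * K.
Proof.
unfold rho2_curv, a43. rewrite (Rpower_four_thirds _ a_pos).
assert (Hroot : 0 < Rpower (a (3 * t)) (1 / 3)) by apply exp_pos.
field. repeat split; lra.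
Qed.

Lemma is_derive_hubble_Emden : is_derive (hubble a) t (sigma * K - 3 * c ^ 2).
Proof.
rewrite <- Emden_accel. apply is_derive_hubble; [lra | exact a_ex_derive | exact Emden].
Qed.

Lemma is_derive_rho2_curv : is_derive (rho2_curv sigma xi a) t (- 4 * c * K).
Proof.
pose proof (is_derive_a43 _ _ a_pos a_ex_derive) as Ha43.
pose proof a43_pos as Hpos.
unfold rho2_curv. auto_derive.
- split; [exists (4 * c * a43 a t); exact Ha43 |].
  split; [| exact I]. apply Rmult_integral_contrapositive_currified; lra.
- change (Derive (fun s => a43 a s) t) with (Derive (a43 a) t).
  rewrite (is_derive_unique _ _ _ Ha43). field. split; lra.
Qed.

Lemma is_derive_rho2_lin : is_derive (rho2_lin a b) t (- 3 * c * B - sigma * b t * K).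
Proof.
pose proof is_derive_hubble_Emden as Hc.
unfold rho2_lin. auto_derive.
- repeat split; [exact db_ex_derive | exact b_ex_derive | exists (sigma * K - 3 * c ^ 2); exact Hc].
- change (Derive (fun s => Derive b s) t) with (Derive (Derive b) t).
  change (Derive (fun s => b s) t) with (Derive b t).
  change (Derive (fun s => hubble a s) t) with (Derive (hubble a) t).
  rewrite (is_derive_unique _ _ _ Hc).
  assert (Hcoef : 12 * xi / a43 a t = 4 * sigma * K).
  { pose proof a43_pos. unfold rho2_curv. field. split; lra. }
  rewrite Hcoef in b_eq.
  replace (Derive (Derive b) t) with (- 6 * c * Derive b t - 4 * sigma * K * b t) by lra.
  unfold rho2_lin. ring.
Qed.

Lemma is_derive_r : is_derive r t (2 / sigma * b t * B - 2 * c * r t).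
Proof.
destruct r_ex_derive as [r' Hr]. rewrite (is_derive_unique _ _ _ Hr) in r_eq.
replace (2 / sigma * b t * B - 2 * c * r t) with r' by (unfold rho2_lin; lra).
exact Hr.
Qed.

Lemma rho2_quad_transport (x : R) :
  let Q := rho2_quad sigma xi a b r in
  ex_dt Q x t /\ ex_dx Q x t /\
  dt Q x t + u_sol a b x t * dx Q x t + 2 * dx (u_sol a b) x t * Q x t = 0.
Proof.
intros Q.
pose proof is_derive_r as Hr.
pose proof is_derive_rho2_lin as HB.
pose proof is_derive_rho2_curv as HK.
assert (Hqt : is_derive (fun s => Q x s) t
  ((2 / sigma * b t * B - 2 * c * r t) - 2 / sigma * (- 3 * c * B - sigma * b t * K) * x
     - (- 4 * c * K) * x ^ 2)).
{ unfold Q. apply (is_derive_ext (fun s => r s - 2 / sigma * rho2_lin a b s * x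
                                           - rho2_curv sigma xi a s * x ^ 2)).
  { intro s. reflexivity. }
  auto_derive.
  - repeat split; [exists (2 / sigma * b t * B - 2 * c * r t); exact Hr
                  | exists (- 3 * c * B - sigma * b t * K); exact HB
                  | exists (- 4 * c * K); exact HK].
  - change (Derive (fun s => r s) t) with (Derive r t).
    change (Derive (fun s => rho2_lin a b s) t) with (Derive (rho2_lin a b) t).
    change (Derive (fun s => rho2_curv sigma xi a s) t) with (Derive (rho2_curv sigma xi a) t).
    rewrite (is_derive_unique _ _ _ Hr), (is_derive_unique _ _ _ HB),
      (is_derive_unique _ _ _ HK).
    ring. }
pose proof (is_derive_rho2_quad_x sigma xi a b r x t) as Hqx.
split; [eexists; exact Hqt |]. split; [eexists; exact Hqx |].
assert (Eqt : dt Q x t = _) by exact (is_derive_unique _ _ _ Hqt).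
assert (Eqx : dx Q x t = _) by exact (is_derive_unique _ _ _ Hqx).
assert (Eux : dx (u_sol a b) x t = _) by exact (is_derive_unique _ _ _ (is_derive_u_sol_x a b x t)).
rewrite Eqt, Eqx, Eux.
unfold Q, rho2_quad, u_sol. fold (rho2_lin a b t) (rho2_curv sigma xi a t).
field. exact sigma_neq0.
Qed.

Lemma momentum_balance (x : R) :
  let u := u_sol a b in
  ex_dt u x t /\
  dt u x t + 3 * dx u x t * u x t + sigma * dx (rho2_quad sigma xi a b r) x t / 2 = 0.
Proof.
intros u.
destruct b_ex_derive as [b' Hb].
pose proof (is_derive_u_sol_t a b x t _ _ is_derive_hubble_Emden Hb) as Hut.
pose proof (is_derive_rho2_quad_x sigma xi a b r x t) as Hqx.
split; [eexists; exact Hut |].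
assert (Eut : dt u x t = _) by exact (is_derive_unique _ _ _ Hut).
assert (Eqx : dx (rho2_quad sigma xi a b r) x t = _) by exact (is_derive_unique _ _ _ Hqx).
assert (Eux : dx u x t = _) by exact (is_derive_unique _ _ _ (is_derive_u_sol_x a b x t)).
rewrite Eut, Eqx, Eux.
unfold u, u_sol, rho2_lin. rewrite (is_derive_unique _ _ _ Hb).
field. exact sigma_neq0.
Qed.

End Evolution.

Theorem theorem1
  (sigma xi alpha a0 a1 b0 b1 T0 T1 : R) (a b r : R -> R)
  (Hsigma : sigma = 1 \/ sigma = -1)
  (HT : T0 < 0 < T1)
  (Ha0 : 0 < a0)
  (Hapos : forall s, 3 * T0 < s < 3 * T1 -> 0 < a s)
  (Haeq : forall s, 3 * T0 < s < 3 * T1 ->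
     ex_derive a s /\ is_derive (Derive a) s (xi / Rpower (a s) (1 / 3)))
  (Hainit : a 0 = a0 /\ Derive a 0 = a1)
  (Hbeq : forall t, T0 < t < T1 ->
     ex_derive b t /\ ex_derive (Derive b) t /\
     Derive (Derive b) t + 6 * hubble a t * Derive b t
       + 12 * xi / a43 a t * b t = 0)
  (Hbinit : b 0 = b0 /\ Derive b 0 = b1)
  (Hreq : forall t, T0 < t < T1 ->
     ex_derive r t /\
     Derive r t + 2 * hubble a t * r t
       - (2 / sigma) * b t * (Derive b t + 3 * b t * hubble a t) = 0)
  (Hrinit : r 0 = alpha ^ 2) :
  let rho := rho_sol sigma xi a b r in
  let u := u_sol a b in
  let m := m_of alpha u in
  forall t x, T0 < t < T1 -> 0 < rho2_quad sigma xi a b r x t ->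
    ex_dt rho x t /\ ex_dx rho x t /\ ex_dt u x t /\ ex_dx u x t /\
    ex_dt m x t /\ ex_dx m x t /\
    dt rho x t + u x t * dx rho x t + rho x t * dx u x t = 0 /\
    dt m x t + 2 * dx u x t * m x t + u x t * dx m x t
      + sigma * rho x t * dx rho x t = 0.
Proof.
cbv zeta. intros t x Ht HQ. rewrite m_of_u_sol.
assert (Hsigma0 : sigma <> 0) by (destruct Hsigma; lra).
assert (H3t : 3 * T0 < 3 * t < 3 * T1) by lra.
destruct (Haeq _ H3t) as [Hea Hda].
destruct (Hbeq _ Ht) as [Heb [Hedb Hb]].
destruct (Hreq _ Ht) as [Her Hr].
destruct (rho2_quad_transport sigma xi a b r t Hsigma0 (Hapos _ H3t) Hea Hda
            Heb Hedb Hb Her Hr x) as [Hqt [Hqx Htransport]].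
destruct (momentum_balance sigma xi a b r t Hsigma0 (Hapos _ H3t) Hea Hda Heb x)
  as [Hut Hmomentum].
assert (Hux : ex_dx (u_sol a b) x t) by (eexists; apply is_derive_u_sol_x).
destruct (continuity_sqrt_pos_part _ _ x t HQ Hqt Hqx Hux Htransport)
  as [Hrt [Hrx [Hcontinuity Hrho_rhox]]].
repeat split; try assumption.
unfold rho_sol. rewrite (Rmult_assoc sigma), Hrho_rhox. lra.
Qed.
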